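(* Let $\mathbf U$ be a real $3\times3$ positive-definite symmetric matrix, $|\hat{\mathbf e}|=1$, $\hat{\mathbf U}=(-\mathbf I+2\hat{\mathbf e}\otimes\hat{\mathbf e})\mathbf U(-\mathbf I+2\hat{\mathbf e}\otimes\hat{\mathbf e})$, and let $\hat{\mathbf R}\in\mathrm{SO}(3)$, nonzero $\mathbf a,\mathbf n\in\mathbb R^3$ satisfy $\hat{\mathbf R}\hat{\mathbf U}=\mathbf U+\mathbf a\otimes\mathbf n$. Suppose the cofactor conditions hold: (CC1) the middle eigenvalue of $\mathbf U$ equals $1$; (CC2) $\mathbf a\cdot\mathbf U\,\mathrm{cof}(\mathbf U^2-\mathbf I)\mathbf n=0$; (CC3) $\mathrm{tr}\,\mathbf U^2-\det\mathbf U^2-\frac{|\mathbf a|^2|\mathbf n|^2}{4}-2\ge0$. For $f\in[0,1]$ let $\mathbf C_f=(\mathbf U+f\,\mathbf n\otimes\mathbf a)(\mathbf U+f\,\mathbf a\otimes\mathbf n)$, with middle eigenvalue $1$ and other eigenvalues $\lambda_1(f)^2\le1\le\lambda_3(f)^2$ ($\lambda_1(f),\lambda_3(f)>0$), and let $\mathbf v_1(f),\mathbf v_3(f)$ be orthonormal eigenvectors of $\mathbf C_f$ for $\lambda_1(f)^2,\lambda_3(f)^2$. Then for each $f\in[0,1]$ with $f\neq1/2$ there are two distinct solutions $(\mathbf R_f^\kappa\in\mathrm{SO}(3),\ \mathbf b_f^\kappa\otimes\mathbf m_f^\kappa)$, $\kappa\in\{\pm1\}$, of $$\mathbf R\big[f(\mathbf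 U+\mathbf a\otimes\mathbf n)+(1-f)\mathbf U\big]-\mathbf I=\mathbf b\otimes\mathbf m,$$ and these are given by $$\mathbf b_f^\kappa=\frac{\rho}{\sqrt{\lambda_3(f)^2-\lambda_1(f)^2}}\Big(\lambda_3(f)\sqrt{1-\lambda_1(f)^2}\,\mathbf v_1(f)+\kappa\,\lambda_1(f)\sqrt{\lambda_3(f)^2-1}\,\mathbf v_3(f)\Big),$$ $$\mathbf m_f^\kappa=\frac1\rho\,\frac{\lambda_3(f)-\lambda_1(f)}{\sqrt{\lambda_3(f)^2-\lambda_1(f)^2}}\Big(-\sqrt{1-\lambda_1(f)^2}\,\mathbf v_1(f)+\kappa\sqrt{\lambda_3(f)^2-1}\,\mathbf v_3(f)\Big),$$ for $\kappa\in\{\pm1\}$ and some $\rho\neq0$ (which does not affect $\mathbf b_f^\kappa\otimes\mathbf m_f^\kappa$).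
   Context: $\mathbf a\otimes\mathbf n$ is the matrix $\mathbf x\mapsto(\mathbf n\cdot\mathbf x)\mathbf a$; $\mathrm{cof}\,\mathbf A$ is the cofactor matrix of $\mathbf A$. Solutions are distinguished by the pair $(\mathbf R,\mathbf b\otimes\mathbf m)$. *)

From mathcomp Require Import all_boot all_order all_algebra.
From mathcomp Require Import reals.
Set Implicit Arguments. Unset Strict Implicit. Unset Printing Implicit Defensive.
Import Order.TTheory GRing.Theory Num.Theory.
Local Open Scope ring_scope.

Section Defs.
Variable R : realType.

(* a (x) n : the matrix x |-> (n . x) a, i.e. a n^T *)
Definition tens (a n : 'cV[R]_3) : 'M[R]_3 := a *m n^T.
Definition dotv (a b : 'cV[R]_3) : R := (a^T *m b) 0 0.
(* cofactor matrix: (cof A) i j = cofactor i j A *)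
Definition cofm (A : 'M[R]_3) : 'M[R]_3 := (\adj A)^T.
Definition SO3 (Q : 'M[R]_3) : Prop := Q^T *m Q = 1%:M /\ \det Q = 1.
Definition sym_posdef (U : 'M[R]_3) : Prop :=
  U^T = U /\ forall x : 'cV[R]_3, x != 0 -> 0 < dotv x (U *m x).
(* the middle eigenvalue of the (symmetric) matrix A equals 1:
   its eigenvalues, listed with multiplicity, are mu1 <= 1 <= mu3 *)
Definition middle_eig_one (A : 'M[R]_3) : Prop :=
  exists mu1 mu3 : R, mu1 <= 1 <= mu3 /\
    char_poly A = ('X - mu1%:P) * ('X - 1) * ('X - mu3%:P).
Definition is_sol (F Q M : 'M[R]_3) : Prop :=
  SO3 Q /\ (exists b m : 'cV[R]_3, M = tens b m) /\ Q *m F - 1%:M = M.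

Definition Cf (U : 'M[R]_3) (a n : 'cV[R]_3) (f : R) : 'M[R]_3 :=
  (U + f *: tens n a) *m (U + f *: tens a n).

Definition bvec (rho l1 l3 kappa : R) (v1 v3 : 'cV[R]_3) : 'cV[R]_3 :=
  (rho / Num.sqrt (l3 ^+ 2 - l1 ^+ 2)) *:
    ((l3 * Num.sqrt (1 - l1 ^+ 2)) *: v1 + (kappa * l1 * Num.sqrt (l3 ^+ 2 - 1)) *: v3).
Definition mvec (rho l1 l3 kappa : R) (v1 v3 : 'cV[R]_3) : 'cV[R]_3 :=
  (rho^-1 * ((l3 - l1) / Num.sqrt (l3 ^+ 2 - l1 ^+ 2))) *:
    ((- Num.sqrt (1 - l1 ^+ 2)) *: v1 + (kappa * Num.sqrt (l3 ^+ 2 - 1)) *: v3).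
End Defs.

(* Write F_f = U + f a (x) n, so that C_f = F_f^T F_f.  Twinning gives
   det (U + a (x) n) = det U; hence no multiple of the dyads a (x) n, n (x) a changes
   det U and det C_f = (det U)^2.  The determinant det (C_f - I) is a quadratic
   polynomial in f: it vanishes at f = 0 by CC1, at f = 1 because C_1 is conjugate to
   U^2 by the half-turn, and its linear coefficient vanishes by CC2; so 1 is an
   eigenvalue of every C_f.  Comparing traces at f = 0 and f = 1 gives
     tr C_f - det C_f - 2 = (CC3 quantity) + |a|^2 |n|^2 (f - 1/2)^2
                          = (1 - l1^2) (l3^2 - 1),
   which places the other two eigenvalues on either side of 1, strictly for f <> 1/2.
   The solutions then come from the Ball-James analysis of
   (I + m (x) b) (I + b (x) m) = C_f in the eigenframe (v1, v1 x v3, v3): the middle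
   components of b and m vanish, the remaining 2x2 system has exactly the two solutions
   kappa = 1, -1, and the rotation is (I + b (x) m) F_f^-1. *)

From mathcomp Require Import all_boot all_order all_algebra.
From mathcomp Require Import reals.
From mathcomp Require Import ring lra.
Import Order.TTheory GRing.Theory Num.Theory.
Local Open Scope ring_scope.
Set Implicit Arguments. Unset Strict Implicit.

Local Notation i0 := (@Ordinal 3 0 isT).
Local Notation i1 := (@Ordinal 3 1 isT).
Local Notation i2 := (@Ordinal 3 2 isT).

Lemma ord3P (i : 'I_3) : [\/ i = i0, i = i1 | i = i2].
Proof. by case: i => -[|[|[|//]]] Hi; [constructor 1 | constructor 2 | constructor 3]; apply: val_inj. Qed.

Ltac expand_mx := rewrite ?(mxE, big_ord_recr, big_ord0) /=.

(* [expand_mx] leaves indices built from [widen_ord] and [lift], convertible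
   but not syntactically equal to [i0], [i1], [i2]; reading the entries of [A]
   through their nat indices lets [ring] identify them. *)
Ltac nat_entries A :=
  let g := fresh "g" in let H := fresh "H" in
  set g := (fun m k : nat => A (inord m) (inord k));
  assert (H : forall i j, A i j = g i j)
    by (let i := fresh in let j := fresh in
        move=> i j; rewrite /g !inord_val; reflexivity);
  rewrite ?H /=; clear H.

(** * Determinants and dyads in dimension 3 *)

Lemma det_mx3E (T : comNzRingType) (A : 'M[T]_3) : \det A =
  A i0 i0 * (A i1 i1 * A i2 i2 - A i1 i2 * A i2 i1)
  - A i0 i1 * (A i1 i0 * A i2 i2 - A i1 i2 * A i2 i0)
  + A i0 i2 * (A i1 i0 * A i2 i1 - A i1 i1 * A i2 i0).
Proof.
rewrite (expand_det_row _ i0) !big_ord_recr big_ord0 /= add0r /cofactor.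
rewrite !(expand_det_row _ ord0) !big_ord_recr !big_ord0 /= !add0r.
rewrite /cofactor !det_mx11 !mxE; nat_entries A; ring.
Qed.

Section Matrix3.
Variable T : comNzRingType.
Implicit Types A : 'M[T]_3.

Lemma mxtrace3E A : \tr A = A i0 i0 + A i1 i1 + A i2 i2.
Proof. rewrite /mxtrace !big_ord_recr big_ord0 /=; nat_entries A; ring. Qed.

Definition minor2_sum A : T :=
  A i0 i0 * A i1 i1 - A i0 i1 * A i1 i0 + A i0 i0 * A i2 i2 - A i0 i2 * A i2 i0
  + A i1 i1 * A i2 i2 - A i1 i2 * A i2 i1.

Lemma char_poly3E A : char_poly A =
  'X^3 - (\tr A)%:P * 'X^2 + (minor2_sum A)%:P * 'X - (\det A)%:P.
Proof.
rewrite /char_poly det_mx3E mxtrace3E det_mx3E /minor2_sum /char_poly_mx !mxE -!val_eqE /=.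
nat_entries A; rewrite !(polyCD, polyCM, polyCN, polyCB); ring.
Qed.

Lemma det_1subE A : \det (1%:M - A) = 1 - \tr A + minor2_sum A - \det A.
Proof. rewrite !det_mx3E mxtrace3E /minor2_sum !mxE -!val_eqE /=; nat_entries A; ring. Qed.

Lemma det_opp3 A : \det (- A) = - \det A.
Proof. by rewrite -scaleN1r detZ -signr_odd /= mulN1r. Qed.

Lemma char_poly3_eig1 A x y :
  char_poly A = ('X - x%:P) * ('X - 1) * ('X - y%:P) <->
  [/\ \tr A = x + 1 + y, minor2_sum A = x + y + x * y & \det A = x * y].
Proof.
have -> : ('X - x%:P) * ('X - 1) * ('X - y%:P) =
    'X^3 - (x + 1 + y)%:P * 'X^2 + (x + y + x * y)%:P * 'X - (x * y)%:P :> {poly T}.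
  by rewrite !(polyCD, polyCM, polyC1); ring.
rewrite char_poly3E; split; last by case=> -> -> ->.
move=> E; have := congr1 (coefp 2) E; have := congr1 (coefp 1) E; have := congr1 (coefp 0) E.
rewrite /= !coefE /= !(mulr0, mulr1, subr0, add0r, addr0) !oppr0 !add0r.
by move=> /oppr_inj d0 m1 /oppr_inj t0.
Qed.
End Matrix3.

Section Vectors.
Variable R : realType.
Implicit Types (a b c d u w x y : 'cV[R]_3) (A M P : 'M[R]_3).

Lemma dotvE a b : dotv a b = a i0 0 * b i0 0 + a i1 0 * b i1 0 + a i2 0 * b i2 0.
Proof. rewrite /dotv; expand_mx; nat_entries a; nat_entries b; ring. Qed.

Lemma tensE a b i j : tens a b i j = a i 0 * b j 0.
Proof. by rewrite /tens; expand_mx; rewrite add0r; nat_entries a; nat_entries b. Qed.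

Lemma dotvC a b : dotv a b = dotv b a.
Proof. rewrite !dotvE; ring. Qed.

Lemma dotvZ a b k : dotv a (k *: b) = k * dotv a b.
Proof. rewrite !dotvE; expand_mx; ring. Qed.

Lemma dotv_mulmx x M y : dotv x (M *m y) = dotv y (M^T *m x).
Proof.
have tr11 (B : 'M[R]_1) : B 0 0 = B^T 0 0 by rewrite mxE.
by rewrite /dotv tr11 !trmx_mul trmxK mulmxA.
Qed.

Lemma dotv_ge0 a : 0 <= dotv a a.
Proof. rewrite dotvE; nra. Qed.

Lemma dotv_gt0 a : a != 0 -> 0 < dotv a a.
Proof.
move=> a_neq0; rewrite lt_neqAle dotv_ge0 andbT; apply: contraNneq a_neq0.
rewrite dotvE => /esym a2_eq0; apply/eqP/matrixP => i j; rewrite (ord1 j) mxE.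
have [a0 a1 a2] : [/\ a i0 0 = 0, a i1 0 = 0 & a i2 0 = 0] by split; nra.
by case: i => -[|[|[|//]]] Hi; [rewrite -a0 | rewrite -a1 | rewrite -a2]; congr (a _ _); apply: val_inj.
Qed.

Lemma trmx_tens a b : (tens a b)^T = tens b a.
Proof. by rewrite /tens trmx_mul trmxK. Qed.

Lemma tens_mul a b c d : tens a b *m tens c d = dotv b c *: tens a d.
Proof. by rewrite /tens mulmxA -(mulmxA a) [_^T *m c]mx11_scalar mul_mx_scalar -scalemxAl. Qed.

Lemma mulmx_tens A a b : A *m tens a b = tens (A *m a) b.
Proof. by rewrite /tens mulmxA. Qed.

Lemma tens_mulmx A a b : tens a b *m A = tens a (A^T *m b).
Proof. by rewrite /tens -mulmxA trmx_mul trmxK. Qed.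

Lemma tens_conj P u w : tens (P *m u) (P *m w) = P *m tens u w *m P^T.
Proof. by rewrite /tens trmx_mul !mulmxA. Qed.

Lemma det_add_tens A a b k :
  \det (A + k *: tens a b) = \det A + k * dotv b (\adj A *m a).
Proof.
rewrite !det_mx3E dotvE; expand_mx; rewrite /cofactor.
rewrite !(expand_det_row _ ord0) !big_ord_recr !big_ord0 /= !add0r.
rewrite /cofactor !det_mx11 /tens; expand_mx.
nat_entries A; nat_entries a; nat_entries b; ring.
Qed.

Lemma det_1add_tens a b : \det (1%:M + tens a b) = 1 + dotv a b.
Proof. by have := det_add_tens 1%:M a b 1; rewrite scale1r det1 adj1 mul1mx mul1r dotvC. Qed.

Lemma det_add_tens_scale A a b k :
  \det (A + tens a b) = \det A -> \det (A + k *: tens a b) = \det A.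
Proof.
move=> det_ab; rewrite det_add_tens.
suff -> : dotv b (\adj A *m a) = 0 by rewrite mulr0 addr0.
apply: (@addrI _ (\det A)).
by rewrite addr0 -[in RHS]det_ab -[tens a b]scale1r det_add_tens mul1r.
Qed.

Lemma mxtrace_tens a b : \tr (tens a b) = dotv a b.
Proof. by rewrite /tens mxtrace_mulC trace_mx11 dotvC. Qed.

Lemma det_add_tens_quadratic (G : 'M[R]_3) (n p : 'cV[R]_3) (c f : R) :
  let L := dotv p (\adj G *m n) + dotv n (\adj G *m p) in
  \det (G + f *: (tens n p + tens p n) + (f ^+ 2 * c) *: tens n n) =
  \det G + f * L
  + f ^+ 2 * (\det (G + (tens n p + tens p n) + c *: tens n n) - \det G - L).
Proof.
rewrite /= !det_mx3E !dotvE; expand_mx; rewrite /cofactor.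
rewrite !(expand_det_row _ ord0) !big_ord_recr !big_ord0 /= !add0r.
rewrite /cofactor !det_mx11 /tens; expand_mx.
nat_entries G; nat_entries n; nat_entries p; ring.
Qed.
End Vectors.

(** * The cofactor conditions and the spectrum of [C_f] *)

Section HalfTurn.
Variables (R : realType) (e : 'cV[R]_3).

Definition half_turn : 'M[R]_3 := - 1%:M + 2%:R *: tens e e.

Lemma trmx_half_turn : half_turn^T = half_turn.
Proof. by rewrite linearD /= linearN /= trmx1 linearZ /= trmx_tens. Qed.

Lemma half_turnK : dotv e e = 1 -> half_turn *m half_turn = 1%:M.
Proof.
move=> e_unit; rewrite mulmxDl !mulmxDr -!scalemxAl -!scalemxAr tens_mul e_unit.
rewrite scale1r !mulNmx !mulmxN opprK !mul1mx mulmx1 scalerA !scalerN -!scaleNr.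
by rewrite -scalerDl -addrA -scalerDl [_ + _ : R](_ : _ = 0) ?scale0r ?addr0 //; ring.
Qed.
End HalfTurn.

Section Twinning.
Variables (R : realType) (U Rh : 'M[R]_3) (e a n : 'cV[R]_3).
Hypotheses (e_unit : dotv e e = 1) (Rh_SO3 : SO3 Rh).
Hypothesis twin : Rh *m (half_turn e *m U *m half_turn e) = U + tens a n.

Lemma det_twin : \det (U + tens a n) = \det U.
Proof.
have [_ det_Rh] := Rh_SO3.
have detQ2 : \det (half_turn e) * \det (half_turn e) = 1.
  by rewrite -det_mulmx half_turnK // det1.
by rewrite -twin !det_mulmx det_Rh mul1r mulrAC detQ2 mul1r.
Qed.

Lemma Cf1_twin (U_sym : U^T = U) :
  Cf U a n 1 = half_turn e *m (U *m U) *m half_turn e.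
Proof.
have [Rh_orth _] := Rh_SO3.
have -> : Cf U a n 1 = (U + tens a n)^T *m (U + tens a n).
  by rewrite /Cf !scale1r; congr (_ *m _); rewrite linearD /= trmx_tens U_sym.
rewrite -twin trmx_mul mulmxA -(mulmxA _ Rh^T) Rh_orth mulmx1 !trmx_mul.
rewrite trmx_half_turn U_sym !mulmxA -(mulmxA _ (half_turn e) (half_turn e)).
by rewrite half_turnK // mulmx1 -(mulmxA _ U U).
Qed.
End Twinning.

Section StretchFamily.
Variables (R : realType) (U : 'M[R]_3) (a n : 'cV[R]_3).
Hypothesis U_sym : U^T = U.

Lemma Cf_trmx_mul f : Cf U a n f = (U + f *: tens a n)^T *m (U + f *: tens a n).
Proof. by rewrite /Cf; congr (_ *m _); rewrite linearD /= linearZ /= trmx_tens U_sym. Qed.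

Lemma Cf_expand f : Cf U a n f = U *m U + f *: (tens n (U *m a) + tens (U *m a) n)
  + (f ^+ 2 * dotv a a) *: tens n n.
Proof.
rewrite /Cf mulmxDl !mulmxDr -!scalemxAl -!scalemxAr mulmx_tens tens_mulmx tens_mul U_sym.
by rewrite !scalerA -expr2 scalerDr !addrA (addrAC _ (f *: tens (U *m a) n)).
Qed.

Lemma mxtrace_Cf f : \tr (Cf U a n f) =
  \tr (U *m U) + 2%:R * f * dotv n (U *m a) + f ^+ 2 * (dotv a a * dotv n n).
Proof.
rewrite Cf_expand !raddfD /= !linearZ /= !mxtrace_tens [dotv (U *m a) n]dotvC.
by rewrite mulrA; congr (_ + _ + _); rewrite mulr2n; ring.
Qed.

Lemma det_Cf (det_an : \det (U + tens a n) = \det U) f :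
  \det (Cf U a n f) = \det U ^+ 2.
Proof. by rewrite Cf_trmx_mul det_mulmx det_tr det_add_tens_scale // expr2. Qed.

Lemma det_Cf_sub1 f :
  \det (U *m U - 1%:M) = 0 -> dotv a (U *m \adj (U *m U - 1%:M) *m n) = 0 ->
  \det (Cf U a n 1 - 1%:M) = 0 -> \det (Cf U a n f - 1%:M) = 0.
Proof.
set G := U *m U - 1%:M => detG CC2 det_C1.
have G_sym : G^T = G by rewrite /G linearB /= trmx1 trmx_mul U_sym.
have Cf_sub1 g : Cf U a n g - 1%:M =
    G + g *: (tens n (U *m a) + tens (U *m a) n) + (g ^+ 2 * dotv a a) *: tens n n.
  by rewrite Cf_expand /G addrAC -!addrA (addrCA (- 1%:M)).
have linear_coef : dotv (U *m a) (\adj G *m n) + dotv n (\adj G *m (U *m a)) = 0.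
  rewrite [dotv n _]dotv_mulmx trmx_adj G_sym dotvC dotv_mulmx U_sym mulmxA.
  by rewrite [dotv a (U *m \adj G *m n)]CC2 addr0.
rewrite Cf_sub1 det_add_tens_quadratic linear_coef detG.
by rewrite -[dotv a a]mul1r -(expr1n _ 2) -[tens n _ + _]scale1r -Cf_sub1 det_C1; ring.
Qed.
End StretchFamily.

Section MiddleEigenvalueOne.
Variable R : realType.

(* [x] and [y] are the roots of [X^2 - (t - 1) X + d], whose discriminant
   exceeds [(t - 3)^2] by [4 (t - d - 2)]. *)
Lemma quadratic_roots_around1 (t d : R) : 0 < d -> 0 <= t - d - 2%:R ->
  exists x y : R, [/\ 0 < x, x <= 1, 1 <= y, x + y = t - 1 & x * y = d].
Proof.
move=> d_gt0 gap_ge0; set s := Num.sqrt ((t - 1) ^+ 2 - 4%:R * d).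
have disc_ge : (t - 3%:R) ^+ 2 <= (t - 1) ^+ 2 - 4%:R * d by nra.
have s2 : s ^+ 2 = (t - 1) ^+ 2 - 4%:R * d.
  by rewrite sqr_sqrtr // (le_trans _ disc_ge) ?sqr_ge0.
have /ler_normlP [s_ge1 s_ge2] : `|t - 3%:R| <= s by rewrite -sqrtr_sqr ler_wsqrtr.
exists ((t - 1 - s) / 2%:R), ((t - 1 + s) / 2%:R).
have prod : (t - 1 - s) / 2%:R * ((t - 1 + s) / 2%:R) = d.
  by rewrite mulrACA -subr_sqr s2; field.
split=> //; try lra.
by rewrite -(pmulr_lgt0 _ (_ : 0 < (t - 1 + s) / 2%:R)) ?prod //; lra.
Qed.

Lemma char_poly_middle1 (A : 'M[R]_3) :
  \det (1%:M - A) = 0 -> 0 < \det A -> 0 <= \tr A - \det A - 2%:R ->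
  exists l1 l3 : R, 0 < l1 /\ 0 < l3 /\ l1 ^+ 2 <= 1 <= l3 ^+ 2 /\
    char_poly A = ('X - (l1 ^+ 2)%:P) * ('X - 1) * ('X - (l3 ^+ 2)%:P).
Proof.
rewrite det_1subE => eig1 det_gt0 gap_ge0.
have [x [y [x_gt0 x_le1 y_ge1 sum prod]]] := quadratic_roots_around1 det_gt0 gap_ge0.
have sqrtK (z : R) : 0 < z -> Num.sqrt z ^+ 2 = z by move=> /ltW; apply: sqr_sqrtr.
exists (Num.sqrt x), (Num.sqrt y).
have y_gt0 : 0 < y by lra.
rewrite (sqrtK x x_gt0) (sqrtK y y_gt0) !sqrtr_gt0 x_gt0 y_gt0 x_le1 y_ge1.
by do 3!split=> //; apply/char_poly3_eig1; split; lra.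
Qed.

Lemma char_poly_middle1_strict (A : 'M[R]_3) (l1 l3 : R) :
  0 < l1 -> 0 < l3 -> l1 ^+ 2 <= 1 <= l3 ^+ 2 ->
  char_poly A = ('X - (l1 ^+ 2)%:P) * ('X - 1) * ('X - (l3 ^+ 2)%:P) ->
  0 < \tr A - \det A - 2%:R -> l1 < 1 /\ 1 < l3.
Proof.
move=> l1_gt0 l3_gt0 /andP[l1_le1 l3_ge1] /char_poly3_eig1[-> _ ->].
have -> : l1 ^+ 2 + 1 + l3 ^+ 2 - l1 ^+ 2 * l3 ^+ 2 - 2%:R = (1 - l1 ^+ 2) * (l3 ^+ 2 - 1).
  by ring.
move=> gap_gt0; split.
  rewrite -(expr_lt1 (n := 2)) ?ltW // lt_neqAle l1_le1 andbT.
  by apply: contraTneq gap_gt0 => ->; rewrite subrr mul0r ltxx.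
rewrite -(expr_gt1 (n := 2)) ?ltW // lt_neqAle l3_ge1 andbT eq_sym.
by apply: contraTneq gap_gt0 => ->; rewrite subrr mulr0 ltxx.
Qed.
End MiddleEigenvalueOne.

Lemma posdef_eigenvalue_gt0 (R : realType) (U : 'M[R]_3) (mu : R) :
  sym_posdef U -> root (char_poly U) mu -> 0 < mu.
Proof.
case=> U_sym U_pos; rewrite -eigenvalue_root_char => /eigenvalueP [v Uv v_neq0].
have vT_neq0 : v^T != 0.
  by apply: contraNneq v_neq0 => /(congr1 trmx); rewrite trmxK trmx0 => ->.
have UvT : U *m v^T = mu *: v^T by rewrite -{1}U_sym -trmx_mul Uv linearZ.
by have := U_pos _ vT_neq0; rewrite UvT dotvZ pmulr_lgt0 // dotv_gt0.
Qed.

Lemma middle_eig_one_det (R : realType) (U : 'M[R]_3) :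
  sym_posdef U -> middle_eig_one U -> 0 < \det U /\ \det (1%:M - U) = 0.
Proof.
move=> Upd [mu1 [mu3 [/andP[mu1_le1 mu3_ge1] chi]]].
have [trU minorU detU] := iffLR (char_poly3_eig1 _ _ _) chi.
have mu1_gt0 : 0 < mu1.
  by apply: (posdef_eigenvalue_gt0 Upd); rewrite chi !rootM root_XsubC eqxx.
split; first by rewrite detU mulr_gt0 // (lt_le_trans ltr01).
by rewrite det_1subE trU minorU detU; ring.
Qed.

(** * Twin solutions in the eigenframe *)

Section Frame.
Variable R : realType.
Implicit Types (u v : 'cV[R]_3) (A C : 'M[R]_3).

Definition cross u v : 'cV[R]_3 := \col_i
  match val i with
  | 0 => u i1 0 * v i2 0 - u i2 0 * v i1 0
  | 1 => u i2 0 * v i0 0 - u i0 0 * v i2 0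
  | _ => u i0 0 * v i1 0 - u i1 0 * v i0 0 end.

Lemma dotv_cross u v : dotv u (cross u v) = 0 /\ dotv v (cross u v) = 0.
Proof. by split; rewrite dotvE /cross; expand_mx; ring. Qed.

Lemma dotv_cross_cross u v :
  dotv (cross u v) (cross u v) = dotv u u * dotv v v - dotv u v ^+ 2.
Proof. rewrite !dotvE /cross; expand_mx; ring. Qed.

Definition frame_col v1 v3 (k : nat) : 'cV[R]_3 :=
  match k with 0 => v1 | 1 => cross v1 v3 | _ => v3 end.

Definition frame v1 v3 : 'M[R]_3 := \matrix_(i, j) frame_col v1 v3 j i 0.

Lemma frame_conjE v1 v3 A i j :
  ((frame v1 v3)^T *m A *m frame v1 v3) i j =
  dotv (frame_col v1 v3 i) (A *m frame_col v1 v3 j).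
Proof.
case: i => -[|[|[|//]]] Hi; case: j => -[|[|[|//]]] Hj;
  rewrite dotvE /cross; expand_mx; nat_entries v1; nat_entries v3; nat_entries A; ring.
Qed.

Definition diag3 (x m y : R) : 'M[R]_3 := \matrix_(i, j)
  if val i == val j then (match val i with 0 => x | 1 => m | _ => y end) else 0.

Lemma det_diag3 x m y : \det (diag3 x m y) = x * m * y.
Proof. rewrite det_mx3E /diag3; expand_mx; ring. Qed.

Section Orthonormal.
Variables v1 v3 : 'cV[R]_3.
Hypotheses (v1_unit : dotv v1 v1 = 1) (v3_unit : dotv v3 v3 = 1) (v13 : dotv v1 v3 = 0).

Lemma frame_orthogonal : (frame v1 v3)^T *m frame v1 v3 = 1%:M.
Proof.
have [c1 c3] := dotv_cross v1 v3; have v31 : dotv v3 v1 = 0 by rewrite dotvC.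
apply/matrixP => i j; rewrite -[_^T]mulmx1 frame_conjE mul1mx !mxE.
case: i => -[|[|[|//]]] Hi; case: j => -[|[|[|//]]] Hj //=;
  rewrite ?[dotv (cross _ _) _]dotvC ?dotv_cross_cross ?v1_unit ?v3_unit ?v13 ?v31 ?c1 ?c3 //.
by rewrite expr0n mulr1 subr0.
Qed.

(* The middle diagonal entry is forced to be 1 by the determinant. *)
Lemma frame_diag C x y : C^T = C ->
  C *m v1 = x *: v1 -> C *m v3 = y *: v3 -> \det C = x * y -> x * y != 0 ->
  (frame v1 v3)^T *m C *m frame v1 v3 = diag3 x 1 y.
Proof.
move=> C_sym Cv1 Cv3 detC xy_neq0.
have [c1 c3] := dotv_cross v1 v3; have v31 : dotv v3 v1 = 0 by rewrite dotvC.
set mu := dotv (cross v1 v3) (C *m cross v1 v3).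
have diagC : (frame v1 v3)^T *m C *m frame v1 v3 = diag3 x mu y.
  apply/matrixP => i j; rewrite frame_conjE !mxE.
  case: i => -[|[|[|//]]] Hi; case: j => -[|[|[|//]]] Hj //=;
    rewrite ?Cv1 ?Cv3 ?dotvZ ?v1_unit ?v3_unit ?v13 ?v31 ?mulr0 ?mulr1 //;
    try (by rewrite dotvC ?c1 ?c3 mulr0);
    by rewrite dotv_mulmx C_sym ?Cv1 ?Cv3 dotvZ dotvC ?c1 ?c3 mulr0.
have : \det ((frame v1 v3)^T *m C *m frame v1 v3) = \det C.
  by rewrite !det_mulmx mulrAC -det_mulmx frame_orthogonal det1 mul1r.
rewrite diagC det_diag3 detC => det_mu.
suff -> : 1 = mu by [].
by apply: (mulIf xy_neq0); rewrite mul1r -[LHS]det_mu; ring.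
Qed.
End Orthonormal.
End Frame.

(* The entries of [(1 + m (x) b) (1 + b (x) m) = diag (l1^2, 1, l3^2)] in
   coordinates, where [B] stands for [|b|^2]. *)
Section TwinEquations.
Variable R : realFieldType.

Lemma twin_middle_vanish (x B b0 b1 m0 m1 : R) : x != 1 ->
  1 + 2%:R * m0 * b0 + B * m0 ^+ 2 = x ->
  1 + 2%:R * m1 * b1 + B * m1 ^+ 2 = 1 ->
  m0 * b1 + b0 * m1 + B * m0 * m1 = 0 ->
  m1 = 0 /\ b1 = 0.
Proof.
move=> x_neq1 E00 E11 E01.
have m0_neq0 : m0 != 0.
  by apply: contra_neq x_neq1 => m0_0; rewrite -E00 m0_0; ring.
have m1_eq0 : m1 = 0.
  have [//|m1_neq0] := eqVneq m1 0; case/eqP: x_neq1.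
  have : m1 * (2%:R * b1 + B * m1) = 0 by rewrite -(subrr 1) -{2}E11; ring.
  move/eqP; rewrite mulf_eq0 (negbTE m1_neq0) /= => /eqP E1.
  have : m1 * (2%:R * b0 + B * m0) = 0.
    have -> : m1 * (2%:R * b0 + B * m0) =
      2%:R * (m0 * b1 + b0 * m1 + B * m0 * m1) - m0 * (2%:R * b1 + B * m1) by ring.
    by rewrite E01 E1; ring.
  move/eqP; rewrite mulf_eq0 (negbTE m1_neq0) /= => /eqP E0.
  by rewrite -E00 -[RHS]addr0 -(mulr0 m0) -E0; ring.
split=> //.
by move: E01; rewrite m1_eq0 !mulr0 !addr0 => /eqP; rewrite mulf_eq0 (negbTE m0_neq0) => /eqP.
Qed.

Lemma sqr_eq_sign (x y : R) : x ^+ 2 = y ^+ 2 ->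
  exists2 kap : R, kap = 1 \/ kap = -1 & x = kap * y.
Proof.
move/eqP; rewrite eqf_sqr => /orP[] /eqP ->; [exists 1 | exists (-1)]; rewrite ?mulN1r ?mul1r //.
- by left.
- by right.
Qed.

Section TwinPlane.
Variables (l1 l3 r1 r3 B b0 b2 m0 m2 : R).
Hypotheses (l1_gt0 : 0 < l1) (l13 : l1 < l3) (r1_gt0 : 0 < r1) (r3_gt0 : 0 < r3).
Hypotheses (r1E : r1 ^+ 2 = 1 - l1 ^+ 2) (r3E : r3 ^+ 2 = l3 ^+ 2 - 1).
Hypotheses (E00 : 1 + 2%:R * m0 * b0 + B * m0 ^+ 2 = l1 ^+ 2)
           (E22 : 1 + 2%:R * m2 * b2 + B * m2 ^+ 2 = l3 ^+ 2)
           (E02 : m0 * b2 + b0 * m2 + B * m0 * m2 = 0)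
           (trace : b0 * m0 + b2 * m2 = l1 * l3 - 1).

Lemma twin_plane_m : exists s kap : R,
  [/\ kap = 1 \/ kap = -1, m0 = - s * r1, m2 = kap * s * r3
    & B * s ^+ 2 = (l3 - l1) / (l1 + l3)].
Proof.
have r1_neq0 : r1 != 0 by apply: lt0r_neq0.
have l13_neq0 : l1 + l3 != 0 by apply: lt0r_neq0; rewrite addr_gt0 // (lt_trans l1_gt0).
have l31_neq0 : l3 - l1 != 0 by apply: lt0r_neq0; rewrite subr_gt0.
set s := - m0 / r1; exists s.
have m0E : m0 = - s * r1 by rewrite /s; field.
have [kap kap_pm m2E] : exists2 kap : R, kap = 1 \/ kap = -1 & m2 = kap * (s * r3).
  apply: sqr_eq_sign; apply: (mulfI (expf_neq0 2 r1_neq0)).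
  transitivity (r3 ^+ 2 * m0 ^+ 2); last by rewrite m0E; ring.
  rewrite r1E r3E -E00 -E22; apply/eqP; rewrite -subr_eq0.
  by rewrite -[0](mulr0 (- (2%:R * m0 * m2))) -E02; apply/eqP; ring.
exists kap; rewrite m0E m2E mulrA; split=> //.
have kap2 : kap ^+ 2 = 1 by case: kap_pm => ->; ring.
have sum : B * (m0 ^+ 2 + m2 ^+ 2) = (l3 - l1) ^+ 2.
  have -> : (l3 - l1) ^+ 2 = l1 ^+ 2 + l3 ^+ 2 - 2%:R - 2%:R * (l1 * l3 - 1) by ring.
  by rewrite -trace -E00 -E22; ring.
have r13 : r1 ^+ 2 + r3 ^+ 2 = (l3 - l1) * (l1 + l3) by rewrite r1E r3E; ring.
have WD : B * s ^+ 2 * ((l3 - l1) * (l1 + l3)) = (l3 - l1) ^+ 2.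
  by rewrite -sum -r13 m0E m2E; ring: kap2.
by rewrite -[B * _](mulfK (mulf_neq0 l31_neq0 l13_neq0)) WD; field; rewrite l13_neq0 l31_neq0.
Qed.
Lemma twin_plane_products :
  exists2 kap : R, kap = 1 \/ kap = -1 &
    [/\ b0 * m0 = - (l3 * r1 ^+ 2) / (l1 + l3),
        b0 * m2 = kap * l3 * r1 * r3 / (l1 + l3),
        b2 * m0 = - (kap * l1 * r1 * r3) / (l1 + l3)
      & b2 * m2 = l1 * r3 ^+ 2 / (l1 + l3)].
Proof.
have [s [kap [kap_pm m0E m2E WE]]] := twin_plane_m.
have r1_neq0 : r1 != 0 by apply: lt0r_neq0.
have r3_neq0 : r3 != 0 by apply: lt0r_neq0.
have l13_neq0 : l1 + l3 != 0 by apply: lt0r_neq0; rewrite addr_gt0 // (lt_trans l1_gt0).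
have kap2 : kap ^+ 2 = 1 by case: kap_pm => ->; ring.
have sb0 : s * b0 = (1 + B * s ^+ 2) * r1 / 2%:R.
  apply: (mulfI r1_neq0); apply/eqP; rewrite -subr_eq0; apply/eqP.
  transitivity ((1 - l1 ^+ 2 - r1 ^+ 2) / 2%:R); last by rewrite r1E subrr mul0r.
  by rewrite -E00 m0E; field.
have sb2 : s * b2 = kap * (1 - B * s ^+ 2) * r3 / 2%:R.
  apply: (mulfI r3_neq0); apply/eqP; rewrite -subr_eq0; apply/eqP.
  transitivity (kap * (l3 ^+ 2 - 1 - r3 ^+ 2) / 2%:R); last by rewrite r3E subrr mulr0 mul0r.
  by rewrite -E22 m2E; field: kap2.
exists kap => //; rewrite m0E m2E.
split.
- transitivity (- (s * b0) * r1); first ring.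
  by rewrite sb0 WE; field; rewrite l13_neq0.
- transitivity (kap * (s * b0) * r3); first ring.
  by rewrite sb0 WE; field; rewrite l13_neq0.
- transitivity (- (s * b2) * r1); first ring.
  by rewrite sb2 WE; field; rewrite l13_neq0.
- transitivity (kap * (s * b2) * r3); first ring.
  by rewrite sb2 WE; field: kap2; rewrite l13_neq0.
Qed.
End TwinPlane.
End TwinEquations.

Section TwinShear.
Variable R : realType.
Implicit Types (kap : R) (b m : 'cV[R]_3).

(* The dyad [b (x) m] of a twin solution in the frame of [frame]: for [kap^2 = 1] it is
   [(l3 r1, 0, kap l1 r3) (x) (-r1, 0, kap r3) / (l1 + l3)], where [r1] and [r3] stand
   for [sqrt (1 - l1^2)] and [sqrt (l3^2 - 1)]. *)
Definition twin_shear (l1 l3 r1 r3 kap : R) : 'M[R]_3 := \matrix_(i, j)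
  match val i, val j with
  | 0, 0 => - (l3 * r1 ^+ 2) / (l1 + l3)
  | 0, 2 => kap * l3 * r1 * r3 / (l1 + l3)
  | 2, 0 => - (kap * l1 * r1 * r3) / (l1 + l3)
  | 2, 2 => l1 * r3 ^+ 2 / (l1 + l3)
  | _, _ => 0 end.

Section ShearParameters.
Variables l1 l3 r1 r3 kap : R.
Hypotheses (l1_gt0 : 0 < l1) (l3_gt0 : 0 < l3).
Hypotheses (r1E : r1 ^+ 2 = 1 - l1 ^+ 2) (r3E : r3 ^+ 2 = l3 ^+ 2 - 1) (kap2 : kap ^+ 2 = 1).

Lemma twin_shear_stretch :
  (1%:M + twin_shear l1 l3 r1 r3 kap)^T *m (1%:M + twin_shear l1 l3 r1 r3 kap)
  = diag3 (l1 ^+ 2) 1 (l3 ^+ 2).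
Proof.
have l13 : l1 + l3 != 0 by apply: lt0r_neq0; rewrite addr_gt0.
apply/matrixP => i j; rewrite /diag3.
case: i => -[|[|[|//]]] Hi; case: j => -[|[|[|//]]] Hj //=; expand_mx.
all: by field: r1E r3E kap2; rewrite ?l13.
Qed.

Lemma det_1add_twin_shear : \det (1%:M + twin_shear l1 l3 r1 r3 kap) = l1 * l3.
Proof.
have l13 : l1 + l3 != 0 by apply: lt0r_neq0; rewrite addr_gt0.
by rewrite det_mx3E /twin_shear; expand_mx; field: r1E r3E kap2; rewrite ?l13.
Qed.
End ShearParameters.

Lemma stretch_1add_tens b m : (1%:M + tens b m)^T *m (1%:M + tens b m) =
  1%:M + tens m b + tens b m + dotv b b *: tens m m.
Proof.
rewrite [(_ + _)^T]linearD /= trmx1 trmx_tens mulmxDl !mulmxDr !mul1mx mulmx1 tens_mul.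
by rewrite addrA (addrAC 1%:M).
Qed.

Lemma twin_shear_unique (l1 l3 r1 r3 : R) b m :
  0 < l1 -> l1 < 1 -> 1 < l3 -> 0 < r1 -> 0 < r3 ->
  r1 ^+ 2 = 1 - l1 ^+ 2 -> r3 ^+ 2 = l3 ^+ 2 - 1 ->
  (1%:M + tens b m)^T *m (1%:M + tens b m) = diag3 (l1 ^+ 2) 1 (l3 ^+ 2) ->
  0 < \det (1%:M + tens b m) ->
  exists2 kap : R, kap = 1 \/ kap = -1 & tens b m = twin_shear l1 l3 r1 r3 kap.
Proof.
move=> l1_gt0 l1_lt1 l3_gt1 r1_gt0 r3_gt0 r1E r3E stretch det_gt0.
have trace : 1 + dotv b m = l1 * l3.
  have /eqP : (1 + dotv b m) ^+ 2 = (l1 * l3) ^+ 2.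
    have := congr1 determinant stretch.
    by rewrite det_mulmx det_tr det_diag3 det_1add_tens mulr1 -expr2 exprMn.
  rewrite eqf_sqr det_1add_tens in det_gt0 * => /orP[/eqP //|/eqP E].
  have : 0 < l1 * l3 by rewrite mulr_gt0 // (lt_trans ltr01).
  lra.
set B := dotv b b.
have E i j : (i == j)%:R + m i 0 * b j 0 + b i 0 * m j 0 + B * (m i 0 * m j 0)
    = diag3 (l1 ^+ 2) 1 (l3 ^+ 2) i j.
  by rewrite -stretch stretch_1add_tens !(tensE, mxE).
have E00 : 1 + 2%:R * m i0 0 * b i0 0 + B * m i0 0 ^+ 2 = l1 ^+ 2.
  by have := E i0 i0; rewrite /diag3 mxE /= => Eij; rewrite -[X in _ = X]Eij; ring.
have E11 : 1 + 2%:R * m i1 0 * b i1 0 + B * m i1 0 ^+ 2 = 1.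
  by have := E i1 i1; rewrite /diag3 mxE /= => Eij; rewrite -[X in _ = X]Eij; ring.
have E22 : 1 + 2%:R * m i2 0 * b i2 0 + B * m i2 0 ^+ 2 = l3 ^+ 2.
  by have := E i2 i2; rewrite /diag3 mxE /= => Eij; rewrite -[X in _ = X]Eij; ring.
have E01 : m i0 0 * b i1 0 + b i0 0 * m i1 0 + B * m i0 0 * m i1 0 = 0.
  by have := E i0 i1; rewrite /diag3 mxE /= => Eij; rewrite -[X in _ = X]Eij; ring.
have E02 : m i0 0 * b i2 0 + b i0 0 * m i2 0 + B * m i0 0 * m i2 0 = 0.
  by have := E i0 i2; rewrite /diag3 mxE /= => Eij; rewrite -[X in _ = X]Eij; ring.
have l1_sq : l1 ^+ 2 != 1 by rewrite lt_eqF // exprn_ilt1 // ltW.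
have [m1_0 b1_0] := twin_middle_vanish l1_sq E00 E11 E01.
have plane_trace : b i0 0 * m i0 0 + b i2 0 * m i2 0 = l1 * l3 - 1.
  by rewrite -trace dotvE m1_0; ring.
have [kap kap_pm [e00 e02 e20 e22]] := twin_plane_products l1_gt0
  (lt_trans l1_lt1 l3_gt1) r1_gt0 r3_gt0 r1E r3E E00 E22 E02 plane_trace.
exists kap => //; apply/matrixP => i j; rewrite tensE mxE.
by case: (ord3P i) => ->; case: (ord3P j) => ->; rewrite /= ?m1_0 ?b1_0 ?mulr0 ?mul0r.
Qed.
End TwinShear.

Section OrthogonalConjugation.
Variables (R : realType) (P : 'M[R]_3).
Hypothesis P_orth : P^T *m P = 1%:M.

Let P_orthC : P *m P^T = 1%:M := mulmx1C P_orth.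

Lemma det_orthogonal_conj (A : 'M[R]_3) : \det (P^T *m A *m P) = \det A.
Proof. by rewrite !det_mulmx mulrC mulrA -det_mulmx P_orthC det1 mul1r. Qed.

Lemma orthogonal_conj_inj (A B : 'M[R]_3) : P^T *m A *m P = P^T *m B *m P -> A = B.
Proof.
move/(congr1 (fun X => P *m X *m P^T)).
by rewrite !mulmxA P_orthC !mul1mx -!mulmxA P_orthC !mulmx1.
Qed.

Lemma orthogonal_conjK (A : 'M[R]_3) : P^T *m (P *m A *m P^T) *m P = A.
Proof. by rewrite !mulmxA P_orth mul1mx -mulmxA P_orth mulmx1. Qed.

Lemma orthogonal_conj_1add (A : 'M[R]_3) :
  P^T *m (1%:M + A) *m P = 1%:M + P^T *m A *m P.
Proof. by rewrite mulmxDr mulmxDl mulmx1 P_orth. Qed.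

Lemma orthogonal_conj_stretch (A : 'M[R]_3) :
  P^T *m ((1%:M + A)^T *m (1%:M + A)) *m P
  = (1%:M + P^T *m A *m P)^T *m (1%:M + P^T *m A *m P).
Proof.
rewrite -orthogonal_conj_1add !trmx_mul trmxK -!mulmxA; congr (_ *m _).
by rewrite !mulmxA -(mulmxA _ P) P_orthC mulmx1.
Qed.
End OrthogonalConjugation.

Section TwinVectors.
Variable R : realType.

Definition coord13 (x y : R) : 'cV[R]_3 :=
  \col_i (match val i with 0 => x | 1 => 0 | _ => y end).

Lemma frame_coord13 (v1 v3 : 'cV[R]_3) (x y : R) :
  frame v1 v3 *m coord13 x y = x *: v1 + y *: v3.
Proof.
apply/matrixP => i j; rewrite (ord1 j) /frame /coord13; expand_mx.
by nat_entries v1; nat_entries v3; ring.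
Qed.

Lemma tens_bvec_mvec (rho l1 l3 kap : R) (v1 v3 : 'cV[R]_3) :
  rho != 0 -> 0 < l1 -> l1 < l3 -> kap ^+ 2 = 1 ->
  tens (bvec rho l1 l3 kap v1 v3) (mvec rho l1 l3 kap v1 v3) =
  frame v1 v3 *m twin_shear l1 l3 (Num.sqrt (1 - l1 ^+ 2)) (Num.sqrt (l3 ^+ 2 - 1)) kap
    *m (frame v1 v3)^T.
Proof.
move=> rho_neq0 l1_gt0 l13 kap2.
rewrite /bvec /mvec !scalerDr !scalerA -!frame_coord13 tens_conj; congr (_ *m _ *m _).
set s := Num.sqrt (l3 ^+ 2 - l1 ^+ 2).
have s_gt0 : 0 < s by rewrite sqrtr_gt0; nra.
have s2 : s ^+ 2 = l3 ^+ 2 - l1 ^+ 2 by rewrite sqr_sqrtr // ltW // -sqrtr_gt0.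
have s_neq0 : s != 0 by apply: lt0r_neq0.
have l13_neq0 : l1 + l3 != 0 by apply: lt0r_neq0; rewrite addr_gt0 // (lt_trans l1_gt0).
apply/matrixP => i j; rewrite tensE /twin_shear /coord13 !mxE.
case: (ord3P i) => ->; case: (ord3P j) => -> /=; rewrite ?mulr0 ?mul0r //.
all: by field: s2 kap2; rewrite ?rho_neq0 ?s_neq0 ?l13_neq0.
Qed.
End TwinVectors.

Lemma SO3_mul_invmx (R : realType) (F G : 'M[R]_3) :
  F \in unitmx -> G^T *m G = F^T *m F -> \det G = \det F -> SO3 (G *m invmx F).
Proof.
move=> F_unit GG detG; split.
  rewrite trmx_mul mulmxA -(mulmxA _ G^T) GG !mulmxA -trmx_mul.
  by rewrite mulmxV // trmx1 mul1mx mulmxV.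
by rewrite det_mulmx det_inv detG mulfV // -unitfE -unitmxE.
Qed.

Section TwinSolutions.
Variables (R : realType) (F : 'M[R]_3) (v1 v3 : 'cV[R]_3) (l1 l3 : R).
Hypotheses (detF_gt0 : 0 < \det F) (l1_gt0 : 0 < l1) (l1_lt1 : l1 < 1) (l3_gt1 : 1 < l3).
Hypotheses (v1_unit : dotv v1 v1 = 1) (v3_unit : dotv v3 v3 = 1) (v13 : dotv v1 v3 = 0).
Hypotheses (Cv1 : F^T *m F *m v1 = l1 ^+ 2 *: v1) (Cv3 : F^T *m F *m v3 = l3 ^+ 2 *: v3).
Hypothesis detC : \det (F^T *m F) = l1 ^+ 2 * l3 ^+ 2.

Local Notation P := (frame v1 v3).
Local Notation shear kap :=
  (twin_shear l1 l3 (Num.sqrt (1 - l1 ^+ 2)) (Num.sqrt (l3 ^+ 2 - 1)) kap).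

Let P_orth : P^T *m P = 1%:M := frame_orthogonal v1_unit v3_unit v13.
Let F_unit : F \in unitmx. Proof. by rewrite unitmxE unitfE lt0r_neq0. Qed.
Let r1E : Num.sqrt (1 - l1 ^+ 2) ^+ 2 = 1 - l1 ^+ 2.
Proof. by rewrite sqr_sqrtr // subr_ge0 expr_le1 // ltW. Qed.
Let r3E : Num.sqrt (l3 ^+ 2 - 1) ^+ 2 = l3 ^+ 2 - 1.
Proof. by rewrite sqr_sqrtr // subr_ge0 exprn_ege1 // ltW. Qed.
Let l3_gt0 : 0 < l3 := lt_trans ltr01 l3_gt1.
Let r1_gt0 : 0 < Num.sqrt (1 - l1 ^+ 2).
Proof. by rewrite sqrtr_gt0 subr_gt0 expr_lt1 // ltW. Qed.
Let r3_gt0 : 0 < Num.sqrt (l3 ^+ 2 - 1).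
Proof. by rewrite sqrtr_gt0 subr_gt0 expr_gt1 // ltW. Qed.

Lemma frame_stretch : P^T *m (F^T *m F) *m P = diag3 (l1 ^+ 2) 1 (l3 ^+ 2).
Proof.
apply: frame_diag => //; first by rewrite trmx_mul trmxK.
by rewrite mulf_neq0 // expf_neq0 // lt0r_neq0.
Qed.

Lemma twin_shear_solution kap : kap ^+ 2 = 1 ->
  is_sol F ((1%:M + P *m shear kap *m P^T) *m invmx F) (P *m shear kap *m P^T).
Proof.
move=> kap2; set M := P *m shear kap *m P^T.
have PMP : P^T *m M *m P = shear kap by rewrite orthogonal_conjK.
have stretch : (1%:M + M)^T *m (1%:M + M) = F^T *m F.
  apply: (orthogonal_conj_inj P_orth).
  rewrite orthogonal_conj_stretch // PMP frame_stretch.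
  exact: twin_shear_stretch l1_gt0 l3_gt0 r1E r3E kap2.
have det_1addM : \det (1%:M + M) = l1 * l3.
  rewrite -(det_orthogonal_conj P_orth) orthogonal_conj_1add // PMP.
  exact: det_1add_twin_shear l1_gt0 l3_gt0 r1E r3E kap2.
have detM : \det (1%:M + M) = \det F.
  have /eqP : \det (1%:M + M) ^+ 2 = \det F ^+ 2.
    by rewrite !expr2 -{1}det_tr -det_mulmx stretch det_mulmx det_tr.
  rewrite eqf_sqr => /orP[/eqP //|/eqP detN]; move: detF_gt0.
  by rewrite -oppr_lt0 -detN det_1addM lt_gtF // mulr_gt0.
split; first exact: SO3_mul_invmx.
split; last by rewrite -mulmxA mulVmx // mulmx1 addrC addKr.
exists (bvec 1 l1 l3 kap v1 v3), (mvec 1 l1 l3 kap v1 v3).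
by rewrite tens_bvec_mvec ?oner_neq0 // (lt_trans l1_lt1).
Qed.

Lemma twin_solution_shear Q M : is_sol F Q M ->
  exists2 kap : R, kap = 1 \/ kap = -1 &
    M = P *m shear kap *m P^T /\ Q = (1%:M + M) *m invmx F.
Proof.
move=> [[Q_orth detQ] [[b [m ->]] QF]].
have QFE : 1%:M + tens b m = Q *m F by rewrite -QF addrC subrK.
have stretch : (1%:M + tens b m)^T *m (1%:M + tens b m) = F^T *m F.
  by rewrite QFE trmx_mul mulmxA -(mulmxA F^T) Q_orth mulmx1.
have PMP : P^T *m tens b m *m P = tens (P^T *m b) (P^T *m m) by rewrite tens_conj trmxK.
have [||kap kap_pm shearE] := twin_shear_unique (b := P^T *m b) (m := P^T *m m)
  l1_gt0 l1_lt1 l3_gt1 r1_gt0 r3_gt0 r1E r3E.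
- by rewrite -PMP -orthogonal_conj_stretch // stretch frame_stretch.
- by rewrite -PMP -orthogonal_conj_1add // det_orthogonal_conj // QFE det_mulmx detQ mul1r.
exists kap => //; split.
  by apply: (orthogonal_conj_inj P_orth); rewrite orthogonal_conjK // PMP.
by rewrite QFE -mulmxA mulmxV // mulmx1.
Qed.

Lemma twin_shear_sign : shear 1 != shear (-1).
Proof.
apply/eqP => /matrixP /(_ i0 i2); rewrite !mxE /= !mul1r !mulN1r.
have : 0 < l3 * Num.sqrt (1 - l1 ^+ 2) * Num.sqrt (l3 ^+ 2 - 1) / (l1 + l3).
  by rewrite !(mulr_gt0, invr_gt0, addr_gt0).
by rewrite mulNr => pos E; lra.
Qed.

Lemma twin_solutions rho : rho != 0 ->
  let Mp := tens (bvec rho l1 l3 1 v1 v3) (mvec rho l1 l3 1 v1 v3) in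
  let Mm := tens (bvec rho l1 l3 (-1) v1 v3) (mvec rho l1 l3 (-1) v1 v3) in
  exists Qp Qm : 'M[R]_3,
    is_sol F Qp Mp /\ is_sol F Qm Mm /\ (Qp, Mp) <> (Qm, Mm) /\
    forall Q M : 'M[R]_3, is_sol F Q M -> (Q, M) = (Qp, Mp) \/ (Q, M) = (Qm, Mm).
Proof.
move=> rho_neq0 Mp Mm.
have l13 : l1 < l3 := lt_trans l1_lt1 l3_gt1.
have MpE : Mp = P *m shear 1 *m P^T by rewrite /Mp tens_bvec_mvec // expr1n.
have MmE : Mm = P *m shear (-1) *m P^T by rewrite /Mm tens_bvec_mvec // sqrrN expr1n.
exists ((1%:M + Mp) *m invmx F), ((1%:M + Mm) *m invmx F); rewrite MpE MmE.
split; first by apply: twin_shear_solution; rewrite expr1n.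
split; first by apply: twin_shear_solution; rewrite sqrrN expr1n.
split.
  case=> _ /(congr1 (fun X => P^T *m X *m P)); rewrite !orthogonal_conjK // => E.
  by move: twin_shear_sign; rewrite E eqxx.
by move=> Q M /twin_solution_shear [kap [->|->] [-> ->]]; [left | right].
Qed.
End TwinSolutions.

Lemma convex_comb_addr (K : pzRingType) (V : lmodType K) (u w : V) (f : K) :
  f *: (u + w) + (1 - f) *: u = u + f *: w.
Proof. by rewrite scalerDr addrAC -scalerDl [f + _]addrC subrK scale1r. Qed.

Section Corollary.
Variables (R : realType) (U Rh : 'M[R]_3) (e a n : 'cV[R]_3).
Hypotheses (Upd : sym_posdef U) (e_unit : dotv e e = 1) (Rh_SO3 : SO3 Rh).
Hypothesis twin : Rh *m (half_turn e *m U *m half_turn e) = U + tens a n.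
Hypothesis CC1 : middle_eig_one U.
Hypothesis CC2 : dotv a (U *m cofm (U ^+ 2 - 1%:M) *m n) = 0.

Let U_sym : U^T = U. Proof. by case: Upd. Qed.

Lemma det_Cf_gt0 f : 0 < \det (Cf U a n f).
Proof.
rewrite (det_Cf U_sym (det_twin e_unit Rh_SO3 twin)) exprn_gt0 //.
by case: (middle_eig_one_det Upd CC1).
Qed.

Lemma det_1sub_Cf f : \det (1%:M - Cf U a n f) = 0.
Proof.
have det_sub1 (A : 'M[R]_3) : \det (1%:M - A) = - \det (A - 1%:M) by rewrite -det_opp3 opprB.
have detG : \det (U *m U - 1%:M) = 0.
  have -> : U *m U - 1%:M = (U - 1%:M) *m (U + 1%:M).
    by rewrite mulmxDr mulmxBl mulmx1 mul1mx addrA subrK.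
  by rewrite det_mulmx -opprB det_opp3 (middle_eig_one_det Upd CC1).2 oppr0 mul0r.
rewrite det_sub1 (det_Cf_sub1 U_sym) ?oppr0 //.
  by move: CC2; rewrite /cofm trmx_adj linearB /= trmx1 expr2 -mulmxE trmx_mul U_sym.
rewrite (Cf1_twin e_unit Rh_SO3 twin U_sym).
have -> : half_turn e *m (U *m U) *m half_turn e - 1%:M =
    half_turn e *m (U *m U - 1%:M) *m half_turn e.
  by rewrite mulmxBr mulmxBl mulmx1 half_turnK.
by rewrite !det_mulmx detG mulr0 mul0r.
Qed.

Lemma Cf_gap f : \tr (Cf U a n f) - \det (Cf U a n f) - 2%:R =
  (\tr (U ^+ 2) - \det (U ^+ 2) - dotv a a * dotv n n / 4%:R - 2%:R)
  + dotv a a * dotv n n * (f - 2%:R^-1) ^+ 2.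
Proof.
have tr_C1 : \tr (Cf U a n 1) = \tr (U *m U).
  by rewrite (Cf1_twin e_unit Rh_SO3 twin U_sym) mxtrace_mulC !mulmxA half_turnK // mul1mx.
have lin : 2%:R * dotv n (U *m a) = - (dotv a a * dotv n n).
  by move: tr_C1; rewrite mxtrace_Cf // expr1n mulr1 mul1r; lra.
rewrite mxtrace_Cf // (det_Cf U_sym (det_twin e_unit Rh_SO3 twin)) [U ^+ 2]expr2 -mulmxE det_mulmx.
by rewrite mulrAC lin; field.
Qed.
End Corollary.

Theorem corollary2 (R : realType) (U Rh : 'M[R]_3) (e a n : 'cV[R]_3) :
  sym_posdef U ->
  dotv e e = 1 ->
  SO3 Rh ->
  a != 0 -> n != 0 ->
  Rh *m ((- 1%:M + 2%:R *: tens e e) *m U *m (- 1%:M + 2%:R *: tens e e))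
    = U + tens a n ->
  (* CC1 *) middle_eig_one U ->
  (* CC2 *) dotv a (U *m cofm (U ^+ 2 - 1%:M) *m n) = 0 ->
  (* CC3 *) 0 <= \tr (U ^+ 2) - \det (U ^+ 2) - dotv a a * dotv n n / 4%:R - 2%:R ->
  forall f : R, 0 <= f <= 1 ->
  (* C_f has middle eigenvalue 1, the others being lambda1^2 <= 1 <= lambda3^2 *)
  (exists l1 l3 : R, 0 < l1 /\ 0 < l3 /\ l1 ^+ 2 <= 1 <= l3 ^+ 2 /\
     char_poly (Cf U a n f)
       = ('X - (l1 ^+ 2)%:P) * ('X - 1) * ('X - (l3 ^+ 2)%:P)) /\
  (forall (l1 l3 : R) (v1 v3 : 'cV[R]_3) (rho : R),
     0 < l1 -> 0 < l3 -> l1 ^+ 2 <= 1 <= l3 ^+ 2 ->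
     char_poly (Cf U a n f)
       = ('X - (l1 ^+ 2)%:P) * ('X - 1) * ('X - (l3 ^+ 2)%:P) ->
     dotv v1 v1 = 1 -> dotv v3 v3 = 1 -> dotv v1 v3 = 0 ->
     Cf U a n f *m v1 = (l1 ^+ 2) *: v1 ->
     Cf U a n f *m v3 = (l3 ^+ 2) *: v3 ->
     rho != 0 ->
     f != 2%:R^-1 ->
     let F := f *: (U + tens a n) + (1 - f) *: U in
     let Mp := tens (bvec rho l1 l3 1 v1 v3) (mvec rho l1 l3 1 v1 v3) in
     let Mm := tens (bvec rho l1 l3 (-1) v1 v3) (mvec rho l1 l3 (-1) v1 v3) in
     exists Qp Qm : 'M[R]_3,
       is_sol F Qp Mp /\ is_sol F Qm Mm /\ (Qp, Mp) <> (Qm, Mm) /\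
       forall Q M : 'M[R]_3, is_sol F Q M -> (Q, M) = (Qp, Mp) \/ (Q, M) = (Qm, Mm)).
Proof.
move=> Upd e_unit Rh_SO3 a_neq0 n_neq0 twin CC1 CC2 CC3 f _.
have gap := Cf_gap Upd e_unit Rh_SO3 twin f.
have AN_gt0 : 0 < dotv a a * dotv n n by rewrite mulr_gt0 // dotv_gt0.
split.
  apply: char_poly_middle1; first exact: det_1sub_Cf Upd e_unit Rh_SO3 twin CC1 CC2 f.
    exact: det_Cf_gt0 Upd e_unit Rh_SO3 twin CC1 f.
  by rewrite gap addr_ge0 // mulr_ge0 ?sqr_ge0 // ltW.
move=> l1 l3 v1 v3 rho l1_gt0 l3_gt0 l13 chi v1_unit v3_unit v13 Cv1 Cv3 rho_neq0 f_neq F.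
have [l1_lt1 l3_gt1] : l1 < 1 /\ 1 < l3.
  apply: (char_poly_middle1_strict l1_gt0 l3_gt0 l13 chi).
  by rewrite gap ltr_wpDl // mulr_gt0 // lt_def sqrf_eq0 subr_eq0 f_neq sqr_ge0.
have [U_sym _] := Upd.
rewrite /F convex_comb_addr; apply: twin_solutions; rewrite -?Cf_trmx_mul //.
- rewrite det_add_tens_scale ?(det_twin e_unit Rh_SO3 twin) //.
  by case: (middle_eig_one_det Upd CC1).
- by case/char_poly3_eig1: chi.
Qed.
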